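(* Index the six faces of a cube by a set $F$, and call two distinct faces adjacent if they share an edge (so each face is adjacent to exactly four faces, all except itself and the opposite face). Define the linear operator $A:\mathbb{R}^F\to\mathbb{R}^F$ by $(Ax)_f=\frac14\sum_{g \text{ adjacent to } f} x_g$. Then for every $x\in\mathbb{R}^F$, as $n\to\infty$, $A^n x$ converges to the vector all of whose entries equal $\frac16\sum_{g\in F}x_g$.
   Context: Interpretation: $x_f$ is the amount of kasha in the bowl on face $f$; each minute every dragon on a face takes one quarter of the kasha of each of its four neighboring faces, while all of its own kasha is taken, so one minute transforms $x$ into $Ax$. Amounts may be arbitrary real numbers. *)

From HB Require Import structures.
From mathcomp Require Import all_boot all_order all_algebra.
From mathcomp Require Import all_classical all_reals all_analysis.
Set Implicit Arguments. Unset Strict Implicit. Unset Printing Implicit Defensive.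
Import Order.TTheory GRing.Theory Num.Theory.
Local Open Scope ring_scope.

(* Faces of the cube [-1,1]^3: a face is determined by an axis (0,1,2) and a
   sign (the face x_axis = +1 or x_axis = -1). *)
Definition face : finType := ('I_3 * bool)%type.

(* Two distinct faces share an edge iff they are perpendicular to different
   axes; faces with the same axis are equal or opposite. *)
Definition adjacent (f g : face) : bool := f.1 != g.1.

Definition kashaA (R : realType) (x : face -> R) : face -> R :=
  fun f => 4^-1 * \sum_(g : face | adjacent f g) x g.

(* The averaging operator only sees, for each axis, the sum of the two
   opposite faces perpendicular to it: (A x)_f = (S - p_a)/4, where S is the
   total and p_a the sum of the two faces on the axis a of f. Hence A
   preserves S, and maps p_a to (S - p_a)/2, so that the deviation p_a - S/3
   is multiplied by -1/2 at each step. Thus p_a tends to S/3 and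
   (A^(n+1) x)_f = (S - p_a)/4 tends to (S - S/3)/4 = S/6. *)
From Pilot Require Import Defs.
From HB Require Import structures.
From mathcomp Require Import all_boot all_order all_algebra.
From mathcomp Require Import all_classical all_reals all_analysis.
From mathcomp Require Import ring.
Import Order.TTheory GRing.Theory Num.Theory.
Import numFieldNormedType.Exports.
Local Open Scope classical_set_scope.
Local Open Scope ring_scope.

Definition axis_sum {V : nmodType} (x : face -> V) (a : 'I_3) : V :=
  x (a, true) + x (a, false).

Lemma big_face_axis {V : nmodType} (P : pred 'I_3) (x : face -> V) :
  \sum_(g : face | P g.1) x g = \sum_(a < 3 | P a) axis_sum x a.
Proof.
rewrite (eq_bigr (fun g : face => x (g.1, g.2))); last by case.
rewrite (eq_bigl (fun g : face => P g.1 && xpredT g.2)) => [|g]; last by rewrite andbT.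
rewrite -(pair_big P xpredT (fun a b => x (a, b))) /=.
by apply: eq_bigr => a _; rewrite big_bool.
Qed.

Lemma sum_face_axis {V : nmodType} (x : face -> V) :
  \sum_(g : face) x g = \sum_(a < 3) axis_sum x a.
Proof. exact: (big_face_axis xpredT). Qed.

Section Averaging.
Variable R : realType.
Implicit Types (x : face -> R) (a : 'I_3).

Lemma kashaA_axis x f :
  kashaA x f = (\sum_(g : face) x g - axis_sum x f.1) / 4.
Proof.
rewrite /kashaA mulrC; congr (_ / 4).
rewrite sum_face_axis (bigD1 f.1) //= addrC addrK -(big_face_axis (predC1 f.1)).
by apply: eq_bigl => g; rewrite /Defs.adjacent /= eq_sym.
Qed.

Lemma axis_sum_kashaA x a :
  axis_sum (kashaA x) a = (\sum_(g : face) x g - axis_sum x a) / 2.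
Proof. by rewrite {1}/axis_sum !kashaA_axis /=; field. Qed.

Lemma sum_kashaA x : \sum_(g : face) kashaA x g = \sum_(g : face) x g.
Proof.
rewrite sum_face_axis (eq_bigr _ (fun a _ => axis_sum_kashaA x a)).
rewrite -mulr_suml sumrB sumr_const card_ord -sum_face_axis -mulr_natr.
by field.
Qed.

Lemma sum_iter_kashaA x n :
  \sum_(g : face) iter n (@kashaA R) x g = \sum_(g : face) x g.
Proof. by elim: n => //= n IHn; rewrite sum_kashaA. Qed.

Lemma axis_sum_iter_kashaA x a n :
  axis_sum (iter n (@kashaA R) x) a - (\sum_(g : face) x g) / 3 =
  (- 2^-1) ^+ n * (axis_sum x a - (\sum_(g : face) x g) / 3).
Proof.
elim: n => [|n IHn]; first by rewrite mul1r.
rewrite iterS axis_sum_kashaA sum_iter_kashaA exprS -mulrA -IHn.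
by field.
Qed.

Lemma cvg_axis_sum_iter_kashaA x a :
  axis_sum (iter n (@kashaA R) x) a @[n --> \oo] --> (\sum_(g : face) x g) / 3.
Proof.
set m := (\sum_(g : face) x g) / 3.
have -> : (fun n => axis_sum (iter n (@kashaA R) x) a) =
    (fun n => m + (- 2^-1) ^+ n * (axis_sum x a - m)).
  by apply/funext => n; rewrite -axis_sum_iter_kashaA /m [RHS]addrC subrK.
rewrite -[X in _ --> X]addr0 -[X in _ --> m + X](mul0r (axis_sum x a - m)).
apply: cvgD; first exact: cvg_cst.
apply: cvgMr_tmp; apply: cvg_expr.
by rewrite normrN ger0_norm ?invr_ge0 // invf_lt1 // ltr1n.
Qed.

End Averaging.

Theorem mainTheorem1 (R : realType) (x : face -> R) :
  (fun n : nat => (iter n (@kashaA R) x : {ptws face -> R})) @ \oo -->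
    ((fun _ : face => 6^-1 * \sum_(g : face) x g) : {ptws face -> R}).
Proof.
apply/(@pointwise_cvgP (discrete_topology face) R) => f.
rewrite -cvg_shiftS /=.
under eq_fun do rewrite kashaA_axis sum_iter_kashaA.
have -> : 6^-1 * \sum_(g : face) x g =
    (\sum_(g : face) x g - (\sum_(g : face) x g) / 3) / 4 by field.
apply: cvgMr_tmp; apply: cvgB; first exact: cvg_cst.
exact: cvg_axis_sum_iter_kashaA.
Qed.
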